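(* Let $(A,B)$ be an $n\times n$ definite pencil and suppose $U\in\mathbb{C}^{n\times k}$ has orthonormal columns spanning a right deflating subspace of $(A,B)$. For any $\epsilon>0$ and any $0<\epsilon'\le\epsilon\left(1+\frac{\|(A,B)\|_2}{\gamma(A,B)}\right)^{-1}$ we have $$\Lambda^{\mathrm{sym}}_{\epsilon'}(U^HAU,U^HBU)\subseteq\Lambda^{\mathrm{sym}}_\epsilon(A,B).$$
   Context: A pencil $(A,B)$ of $n\times n$ complex matrices is definite if $A,B$ are Hermitian and $\gamma(A,B)=\min_{\|x\|_2=1}|x^H(A+iB)x|>0$. A $k$-dimensional subspace $\mathcal X\subseteq\mathbb{C}^n$ is a right deflating subspace of $(A,B)$ if $\dim(A\mathcal X+B\mathcal X)\le k$ (for a definite pencil, equivalently, $\mathcal X$ is spanned by $k$ columns of a nonsingular $X$ with $X^HAX$ and $X^HBX$ diagonal). $\|(A,B)\|_2$ is the spectral norm of the $n\times2n$ matrix $[A,\ B]$. For Hermitian $A,B$ (of any size) and $\delta>0$, $\Lambda^{\mathrm{sym}}_\delta(A,B)=\{z\in\mathbb{C}:(A+E)u=z(B+F)u$ for some $u\ne0$ and Hermitian $E,F$ with $\sqrt{\|E\|_2^2+\|F\|_2^2}\le\delta\}$. *)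

From HB Require Import structures.
From mathcomp Require Import all_boot all_order all_algebra.
From mathcomp Require Import complex.
From mathcomp Require Import boolp classical_sets reals.
Set Implicit Arguments. Unset Strict Implicit. Unset Printing Implicit Defensive.
Import Order.TTheory GRing.Theory Num.Theory.
Local Open Scope ring_scope.
Local Open Scope classical_set_scope.

Section Defs.
Variable R : realType.
Local Notation C := (R[i]).

Definition iC : C := Complex 0 1.

Definition ctr {m p : nat} (M : 'M[C]_(m, p)) : 'M[C]_(p, m) := map_mx (@conjc R) M^T.

Definition hermitian {m : nat} (A : 'M[C]_m) : Prop := ctr A = A.

Definition vnorm {m : nat} (x : 'cV[C]_m) : R :=
  Num.sqrt (\sum_i (Normc.normc (x i 0)) ^+ 2).

Definition specnorm {m p : nat} (M : 'M[C]_(m, p)) : R :=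
  sup [set vnorm (M *m x) | x in [set x : 'cV[C]_p | vnorm x = 1]].

Definition pencil_norm {n : nat} (A B : 'M[C]_n) : R := specnorm (row_mx A B).

Definition crawford {n : nat} (A B : 'M[C]_n) : R :=
  inf [set Normc.normc ((ctr x *m (A + iC *: B) *m x) 0 0) | x in [set x : 'cV[C]_n | vnorm x = 1]].

Definition definite_pencil {n : nat} (A B : 'M[C]_n) : Prop :=
  [/\ hermitian A, hermitian B & 0 < crawford A B].

(* the column space X of U is a right deflating subspace of (A,B):
   dim (A X + B X) <= dim X; A X + B X is the column space of [A U, B U]. *)
Definition right_deflating_span {n k : nat} (A B : 'M[C]_n) (U : 'M[C]_(n, k)) : Prop :=
  (\rank (row_mx (A *m U) (B *m U)) <= \rank U)%N.

Definition sym_pseudospec {m : nat} (delta : R) (A B : 'M[C]_m) : set C :=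
  [set z | exists (u : 'cV[C]_m) (E F : 'M[C]_m),
     [/\ u != 0, hermitian E, hermitian F,
         Num.sqrt (specnorm E ^+ 2 + specnorm F ^+ 2) <= delta &
         (A + E) *m u = z *: ((B + F) *m u)]].

End Defs.

From Pilot Require Import Defs.
From HB Require Import structures.
From mathcomp Require Import all_boot all_order all_algebra.
From mathcomp Require Import complex.
From mathcomp Require Import boolp classical_sets reals.
From mathcomp Require Import ring lra.
Import Order.TTheory GRing.Theory Num.Theory.
Local Open Scope ring_scope.
Local Open Scope classical_set_scope.

(* A definite pencil has a rotation G = Re(w) A - Im(w) B that is positive
   definite with smallest eigenvalue at least gamma(A,B) - eta for any eta > 0:
   by Toeplitz-Hausdorff the numerical range of A + iB is convex, so it lies in
   a half-plane at distance almost gamma from 0, the normal direction w being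
   read off a near-minimizer of |x^H (A + iB) x|.  The compression
   H = U^H G U is then invertible with ||H^-1|| <= 1 / (gamma - eta), and since
   A X + B X is the column space of G U, the matrix L = G U H^-1 satisfies
   U^H L = I, A U = L (U^H A U), B U = L (U^H B U) and
   ||L|| <= ||(A,B)|| / (gamma - eta).  If (U^H A U + E') u = z (U^H B U + F') u,
   then x = U u satisfies (A + E) x = z (B + F) x for any Hermitian E, F with
   E x = L E' u and F x = L F' u; such E, F of norm at most ||L E' u|| and
   ||L F' u|| exist because x^H L E' u = u^H E' u is real (scaled Householder
   reflections).  Finally eta is chosen with
   ||(A,B)|| / (gamma - eta) <= 1 + ||(A,B)|| / gamma. *)

Set Implicit Arguments. Unset Strict Implicit. Unset Printing Implicit Defensive.

Lemma lerp_lower_bound (R : realFieldType) (g eta t P Q r d s : R) :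
  0 <= g -> 0 < eta -> 0 < t -> t * s <= g * eta -> d <= s ->
  Q ^+ 2 = P ^+ 2 + 2%:R * t * (r - P ^+ 2) + t ^+ 2 * d ->
  g <= Q -> g <= P -> P ^+ 2 <= g ^+ 2 + t * g * eta ->
  (g - eta) * P <= r.
Proof.
move=> g_ge0 eta_gt0 t_gt0 ts_le d_le Q_sqr g_le_Q g_le_P P_sqr_le.
have : g ^+ 2 <= Q ^+ 2 by rewrite ler_pXn2r ?nnegrE //; lra.
have td_le : t ^+ 2 * d <= t * (g * eta) by rewrite expr2 -mulrA ler_pM2l //; nra.
rewrite Q_sqr => g_sqr_le.
have r_ge : P ^+ 2 - g * eta <= r.
  have : 0 <= t * (2%:R * (r - P ^+ 2) + 2%:R * g * eta) by nra.
  by rewrite pmulr_rge0 //; lra.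
nra.
Qed.

Lemma exists_sqr_increment (R : realFieldType) (g m : R) : 0 <= g -> 0 < m ->
  exists2 d, 0 < d & (g + d) ^+ 2 <= g ^+ 2 + m.
Proof.
move=> g_ge0 m_gt0; exists (m / (2%:R * g + 1 + m)); first by apply: divr_gt0; lra.
set d := m / _.
have dE : d * (2%:R * g + 1 + m) = m by rewrite /d mulfVK //; apply/eqP; lra.
have d_gt0 : 0 < d by apply: divr_gt0 => //; lra.
nra.
Qed.

Lemma ratio_slack (R : realFieldType) (g N : R) : 0 < g -> 0 <= N ->
  exists2 eta, 0 < eta < g & N / (g - eta) <= 1 + N / g.
Proof.
move=> g_gt0 N_ge0; have d_gt0 : 0 < 2%:R * g + N by lra.
exists (g ^+ 2 / (2%:R * g + N)).
  apply/andP; split; first by rewrite divr_gt0 // exprn_gt0.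
  by rewrite ltr_pdivrMr // expr2 ltr_pM2l //; lra.
have -> : g - g ^+ 2 / (2%:R * g + N) = g * (g + N) / (2%:R * g + N).
  by field; apply/eqP; lra.
have -> : 1 + N / g = (g + N) / g by field; apply/eqP; lra.
rewrite invf_div mulrA ler_pdivrMr; last by apply: mulr_gt0; lra.
rewrite mulrAC ler_pdivlMr //; nra.
Qed.

Lemma sqrt_sum_sqr_le (R : rcfType) (c a b a' b' : R) :
  0 <= c -> 0 <= a <= c * a' -> 0 <= b <= c * b' ->
  Num.sqrt (a ^+ 2 + b ^+ 2) <= c * Num.sqrt (a' ^+ 2 + b' ^+ 2).
Proof.
move=> c_ge0 /andP[a_ge0 a_le] /andP[b_ge0 b_le].
rewrite -(ger0_norm c_ge0) -sqrtr_sqr -sqrtrM ?sqr_ge0 // ler_wsqrtr //.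
by rewrite mulrDr -!exprMn lerD // ler_pXn2r ?nnegrE //; lra.
Qed.

Lemma quadratic_pos_root (R : rcfType) (t rho : R) : 0 < t -> t < 1 ->
  exists2 y, 0 < y & (1 - t) * y ^+ 2 + rho * y - t = 0.
Proof.
move=> t_gt0 t_lt1.
set D := rho ^+ 2 + 4%:R * t * (1 - t).
have D_ge0 : 0 <= D by rewrite /D; nra.
set s := Num.sqrt D.
have s_ge0 : 0 <= s := sqrtr_ge0 D.
have s_sqr : s ^+ 2 = D by rewrite sqr_sqrtr.
have rho_lt_s : rho < s.
  have [rho_lt0|rho_ge0] := ltP rho 0; first lra.
  by rewrite -(ltr_pXn2r (n:=2)) ?nnegrE // s_sqr /D; nra.
exists ((s - rho) / (2%:R * (1 - t))); first by apply: divr_gt0; lra.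
have -> : (1 - t) * ((s - rho) / (2%:R * (1 - t))) ^+ 2 + rho * ((s - rho) / (2%:R * (1 - t))) - t
    = (s ^+ 2 - D) / (4%:R * (1 - t)) by rewrite /D; field; apply/eqP; lra.
by rewrite s_sqr subrr mul0r.
Qed.

Section PencilCompression.
Variable R : realType.
Local Notation C := R[i].
Local Notation normc := (@Normc.normc R).
Local Notation Re := (@complex.Re R).
Local Notation Im := (@complex.Im R).
Local Open Scope complex_scope.
Implicit Types (m p : nat).

Lemma normc_ge0 (z : C) : 0 <= normc z.
Proof. by case: z => a b; rewrite /Normc.normc sqrtr_ge0. Qed.

Lemma normc_sqr (z : C) : (normc z ^+ 2)%:C = z * conjc z.
Proof.
case: z => a b; rewrite /Normc.normc sqr_sqrtr ?addr_ge0 ?sqr_ge0 //.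
by simpc; apply/eqP; rewrite eq_complex /=; apply/andP; split; apply/eqP; ring.
Qed.

Lemma normc_real (a : R) : normc a%:C = `|a|.
Proof. by rewrite /Normc.normc /= expr0n /= addr0 sqrtr_sqr. Qed.

Lemma normc_conj (z : C) : normc (conjc z) = normc z.
Proof. by case: z => a b; rewrite /Normc.normc /= sqrrN. Qed.

(* Restated so that rewriting leaves a plain [conjc], not the bundled morphism. *)
Lemma conjcD (x y : C) : conjc (x + y) = conjc x + conjc y.
Proof. exact: rmorphD. Qed.

Lemma conjcM (x y : C) : conjc (x * y) = conjc x * conjc y.
Proof. exact: rmorphM. Qed.

Lemma realC_neq0 (a : R) : a != 0 -> a%:C != 0.
Proof. by apply: contra => /eqP[/eqP]. Qed.

Lemma Re_realM (a : R) (z : C) : Re (a%:C * z) = a * Re z.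
Proof. by case: z => x y /=; ring. Qed.

Lemma conjc_eq_real (z : C) : conjc z = z -> z = (Re z)%:C.
Proof.
case: z => a b /= [h]; apply/eqP; rewrite eq_complex /= eqxx /=.
apply/eqP; lra.
Qed.

Definition dotc m (x y : 'cV[C]_m) : C := \sum_i conjc (x i 0) * y i 0.

Lemma dotcE m (x y : 'cV[C]_m) : (ctr x *m y) 0 0 = dotc x y.
Proof. by rewrite mxE; apply: eq_bigr => i _; rewrite !mxE. Qed.

Lemma dotcDl m (x y z : 'cV[C]_m) : dotc (x + y) z = dotc x z + dotc y z.
Proof. by rewrite /dotc -big_split; apply: eq_bigr => i _; rewrite mxE rmorphD mulrDl. Qed.

Lemma dotcDr m (x y z : 'cV[C]_m) : dotc z (x + y) = dotc z x + dotc z y.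
Proof. by rewrite /dotc -big_split; apply: eq_bigr => i _; rewrite mxE mulrDr. Qed.

Lemma dotcZl m a (x z : 'cV[C]_m) : dotc (a *: x) z = conjc a * dotc x z.
Proof. by rewrite /dotc mulr_sumr; apply: eq_bigr => i _; rewrite mxE rmorphM mulrA. Qed.

Lemma dotcZr m a (x z : 'cV[C]_m) : dotc z (a *: x) = a * dotc z x.
Proof. by rewrite /dotc mulr_sumr; apply: eq_bigr => i _; rewrite mxE mulrCA. Qed.

Lemma dotcBl m (x y z : 'cV[C]_m) : dotc (x - y) z = dotc x z - dotc y z.
Proof. by rewrite dotcDl -scaleN1r dotcZl rmorphN rmorph1 mulN1r. Qed.

Lemma dotcBr m (x y z : 'cV[C]_m) : dotc z (x - y) = dotc z x - dotc z y.
Proof. by rewrite dotcDr -scaleN1r dotcZr mulN1r. Qed.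

Lemma dotcC m (x y : 'cV[C]_m) : dotc y x = conjc (dotc x y).
Proof.
by rewrite /dotc rmorph_sum; apply: eq_bigr => i _; rewrite rmorphM /= conjcK mulrC.
Qed.

Lemma ctr_mul m p q (M : 'M[C]_(m, p)) (N : 'M[C]_(p, q)) :
  ctr (M *m N) = ctr N *m ctr M.
Proof.
apply/matrixP => i j; rewrite !mxE rmorph_sum; apply: eq_bigr => l _.
by rewrite !mxE rmorphM mulrC.
Qed.

Lemma ctrK m p (M : 'M[C]_(m, p)) : ctr (ctr M) = M.
Proof. by apply/matrixP => i j; rewrite !mxE conjcK. Qed.

Lemma ctrD m p (M N : 'M[C]_(m, p)) : ctr (M + N) = ctr M + ctr N.
Proof. by apply/matrixP => i j; rewrite !mxE rmorphD. Qed.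

Lemma ctrN m p (M : 'M[C]_(m, p)) : ctr (- M) = - ctr M.
Proof. by apply/matrixP => i j; rewrite !mxE rmorphN. Qed.

Lemma ctrZ m p a (M : 'M[C]_(m, p)) : ctr (a *: M) = conjc a *: ctr M.
Proof. by apply/matrixP => i j; rewrite !mxE rmorphM. Qed.

Lemma ctr1 m : ctr (1%:M : 'M[C]_m) = 1%:M.
Proof.
by apply/matrixP => i j; rewrite !mxE [i == j]eq_sym; case: (j == i); rewrite ?conjc1 ?conjc0.
Qed.

Lemma dotc_mulmx m p (M : 'M[C]_(m, p)) x y : dotc x (M *m y) = dotc (ctr M *m x) y.
Proof. by rewrite -!dotcE ctr_mul ctrK mulmxA. Qed.

Lemma vnorm_ge0 m (x : 'cV[C]_m) : 0 <= vnorm x.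
Proof. exact: sqrtr_ge0. Qed.

Lemma vnorm_sqr m (x : 'cV[C]_m) : vnorm x ^+ 2 = \sum_i normc (x i 0) ^+ 2.
Proof. by rewrite /vnorm sqr_sqrtr // sumr_ge0 // => i _; rewrite sqr_ge0. Qed.

Lemma dotcc m (x : 'cV[C]_m) : dotc x x = (vnorm x ^+ 2)%:C.
Proof.
by rewrite vnorm_sqr rmorph_sum; apply: eq_bigr => i _; rewrite /= normc_sqr mulrC.
Qed.

Lemma vnorm_eq0 m (x : 'cV[C]_m) : (vnorm x == 0) = (x == 0).
Proof.
apply/eqP/eqP => [x0|->]; last first.
  by rewrite /vnorm big1 ?sqrtr0 // => i _; rewrite mxE Normc.normc0 expr0n.
have /eqP : vnorm x ^+ 2 = 0 by rewrite x0 expr0n.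
rewrite vnorm_sqr psumr_eq0 => [/allP xi0|i _]; last exact: sqr_ge0.
apply/matrixP => i j; rewrite (ord1 j) mxE.
have /xi0 : i \in index_enum 'I_m by rewrite mem_index_enum.
by rewrite /= expf_eq0 /= => /eqP /Normc.eq0_normc.
Qed.

Lemma vnorm0 m : vnorm (0 : 'cV[C]_m) = 0.
Proof. by apply/eqP; rewrite vnorm_eq0. Qed.

Lemma vnorm_gt0 m (x : 'cV[C]_m) : (0 < vnorm x) = (x != 0).
Proof. by rewrite lt_neqAle vnorm_ge0 andbT eq_sym vnorm_eq0. Qed.

Lemma vnormZ m (a : C) (x : 'cV[C]_m) : vnorm (a *: x) = normc a * vnorm x.
Proof.
rewrite /vnorm (eq_bigr (fun i => normc a ^+ 2 * normc (x i 0) ^+ 2)); last first.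
  by move=> i _; rewrite mxE Normc.normcM exprMn.
by rewrite -mulr_sumr sqrtrM ?sqr_ge0 // sqrtr_sqr ger0_norm ?normc_ge0.
Qed.

Lemma unit_cV_decomp m (x : 'cV[C]_m) : x != 0 ->
  exists2 y, vnorm y = 1 & x = (vnorm x)%:C *: y.
Proof.
rewrite -vnorm_gt0 => x_gt0; exists ((vnorm x)^-1%:C *: x).
  by rewrite vnormZ normc_real ger0_norm ?invr_ge0 ?vnorm_ge0 // mulVf ?gt_eqF.
by rewrite scalerA -rmorphM /= mulfV ?gt_eqF // scale1r.
Qed.

Lemma normc_dotc_le m (x y : 'cV[C]_m) : normc (dotc x y) <= vnorm x * vnorm y.
Proof.
have [->|y0] := eqVneq y 0.
  by rewrite vnorm0 mulr0 /dotc big1 ?Normc.normc0 // => i _; rewrite mxE mulr0.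
set s := dotc x y; set N := vnorm y ^+ 2.
have N_gt0 : 0 < N by rewrite exprn_gt0 // vnorm_gt0.
(* expand [0 <= |x - a y|^2] for the projection coefficient [a = conj s / |y|^2] *)
have key : (vnorm (x - (conjc s / N%:C) *: y) ^+ 2)%:C = (vnorm x ^+ 2 - normc s ^+ 2 / N)%:C.
  rewrite rmorphB [X in _ = _ - X]rmorphM /= normc_sqr fmorphV /=.
  rewrite -dotcc dotcBl !dotcBr !dotcZl !dotcZr !dotcc -/N -/s (dotcC x y) -/s.
  rewrite conjcM conjcK conjc_inv conjc_real.
  by field; rewrite realC_neq0 ?gt_eqF.
have : 0 <= vnorm x ^+ 2 - normc s ^+ 2 / N by case: key => <-; rewrite sqr_ge0.
rewrite subr_ge0 ler_pdivrMr // /N -exprMn => H.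
by rewrite -(ler_pXn2r (n:=2)) // ?nnegrE ?mulr_ge0 ?vnorm_ge0 ?normc_ge0.
Qed.

Lemma Re_dotc_le m (x y : 'cV[C]_m) : Re (dotc x y) <= vnorm x * vnorm y.
Proof.
apply: le_trans (normc_dotc_le x y); case: (dotc x y) => a b /=.
rewrite /Normc.normc; apply: le_trans (ler_norm a) _.
by rewrite -sqrtr_sqr ler_wsqrtr // lerDl sqr_ge0.
Qed.

Definition frobenius m p (M : 'M[C]_(m, p)) : R :=
  Num.sqrt (\sum_i vnorm (ctr (row i M)) ^+ 2).

Lemma vnorm_mulmx_le_frobenius m p (M : 'M[C]_(m, p)) x :
  vnorm (M *m x) <= frobenius M * vnorm x.
Proof.
have frob_sqr : frobenius M ^+ 2 = \sum_i vnorm (ctr (row i M)) ^+ 2.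
  by rewrite sqr_sqrtr // sumr_ge0 // => i _; exact: sqr_ge0.
rewrite -(ler_pXn2r (n:=2)) ?nnegrE ?mulr_ge0 ?vnorm_ge0 ?sqrtr_ge0 //.
rewrite exprMn frob_sqr vnorm_sqr mulr_suml; apply: ler_sum => i _.
have -> : (M *m x) i 0 = dotc (ctr (row i M)) x.
  by rewrite mxE /dotc; apply: eq_bigr => j _; rewrite !mxE conjcK.
rewrite -exprMn ler_pXn2r ?nnegrE ?mulr_ge0 ?vnorm_ge0 ?normc_ge0 //.
exact: normc_dotc_le.
Qed.

Let unit_image m p (M : 'M[C]_(m, p)) :=
  [set vnorm (M *m x) | x in [set x : 'cV[C]_p | vnorm x = 1]].

Lemma unit_image_ubound m p (M : 'M[C]_(m, p)) : has_ubound (unit_image M).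
Proof.
exists (frobenius M) => _ [x /= x1 <-].
by apply: le_trans (vnorm_mulmx_le_frobenius M x) _; rewrite x1 mulr1.
Qed.

Lemma specnorm_ge0 m p (M : 'M[C]_(m, p)) : 0 <= specnorm M.
Proof.
rewrite /specnorm -/(unit_image M).
have [->|/set0P[_ [x x1 _]]] := eqVneq (unit_image M) set0; first by rewrite sup0.
apply: le_trans (vnorm_ge0 (M *m x)) _.
by apply: (ub_le_sup (unit_image_ubound M)); exists x.
Qed.

Lemma specnorm_le m p (M : 'M[C]_(m, p)) c : 0 <= c ->
  (forall x, vnorm (M *m x) <= c * vnorm x) -> specnorm M <= c.
Proof.
move=> c_ge0 Mc; rewrite /specnorm -/(unit_image M).
have [->|/set0P ne] := eqVneq (unit_image M) set0; first by rewrite sup0.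
by apply: ge_sup => // _ [x /= x1 <-]; rewrite -[c]mulr1 -x1.
Qed.

Lemma vnorm_mulmx_le m p (M : 'M[C]_(m, p)) x : vnorm (M *m x) <= specnorm M * vnorm x.
Proof.
have [->|x0] := eqVneq x 0.
  by rewrite mulmx0 vnorm0 mulr_ge0 ?specnorm_ge0 ?vnorm_ge0.
have [y y1 ->] := unit_cV_decomp x0.
rewrite -scalemxAr !vnormZ y1 mulr1 mulrC ler_wpM2r ?normc_ge0 //.
by apply: (ub_le_sup (unit_image_ubound M)); exists y.
Qed.

Lemma vnorm_col_mx m p (a : 'cV[C]_m) (b : 'cV[C]_p) :
  vnorm (col_mx a b) ^+ 2 = vnorm a ^+ 2 + vnorm b ^+ 2.
Proof.
rewrite !vnorm_sqr big_split_ord /=.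
by congr (_ + _); apply: eq_bigr => i _; rewrite ?col_mxEu ?col_mxEd.
Qed.

Lemma vnorm_pencil_le n (A B : 'M[C]_n) a b :
  vnorm (A *m a + B *m b) <= pencil_norm A B * Num.sqrt (vnorm a ^+ 2 + vnorm b ^+ 2).
Proof.
rewrite -vnorm_col_mx sqrtr_sqr ger0_norm ?vnorm_ge0 // -mul_row_col.
exact: vnorm_mulmx_le.
Qed.

Lemma isometry_vnorm n k (U : 'M[C]_(n, k)) q :
  ctr U *m U = 1%:M -> vnorm (U *m q) = vnorm q.
Proof.
move=> UU; have : dotc (U *m q) (U *m q) = dotc q q.
  by rewrite dotc_mulmx mulmxA UU mul1mx.
by rewrite !dotcc => -[/eqP]; rewrite eqrXn2 ?vnorm_ge0 // => /eqP.
Qed.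

Definition qform n (T : 'M[C]_n) (x : 'cV[C]_n) : C := dotc x (T *m x).

Lemma qformZ n (T : 'M[C]_n) x c : qform T (c *: x) = conjc c * c * qform T x.
Proof. by rewrite /qform -scalemxAr dotcZl dotcZr mulrA. Qed.

Lemma dotc_addZ n (x y u v : 'cV[C]_n) c :
  dotc (x + c *: y) (u + c *: v) =
  dotc x u + c * dotc x v + conjc c * dotc y u + conjc c * c * dotc y v.
Proof. rewrite dotcDl !dotcDr !dotcZl !dotcZr; ring. Qed.

Lemma qform_addZ n (T : 'M[C]_n) x y c :
  qform T (x + c *: y) =
  qform T x + c * dotc x (T *m y) + conjc c * dotc y (T *m x) + conjc c * c * qform T y.
Proof. by rewrite /qform mulmxDr -scalemxAr dotc_addZ. Qed.

Lemma exists_phase (k : C) : exists2 e : C, conjc e * e = 1 & conjc (e * k) = e * k.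
Proof.
have [->|k0] := eqVneq k 0; first by exists 1; rewrite ?mulr0 ?conjc1 ?mulr1 ?conjc0.
have nk0 : (normc k)%:C != 0.
  by rewrite realC_neq0 //; apply: contra k0 => /eqP/Normc.eq0_normc->.
have nk_sqr := normc_sqr k; rewrite rmorphXn /= in nk_sqr.
exists (conjc k / (normc k)%:C).
  rewrite conjcM conjcK conjc_inv conjc_real.
  transitivity (k * conjc k / (normc k)%:C ^+ 2); first by field.
  by rewrite -nk_sqr mulfV // expf_neq0.
have -> : conjc k / (normc k)%:C * k = (normc k)%:C.
  transitivity (k * conjc k / (normc k)%:C); first by field.
  by rewrite -nk_sqr expr2 mulfK.
exact: conjc_real.
Qed.

Lemma conjc_phase_sum (e a b : C) : conjc (e * (a - conjc b)) = e * (a - conjc b) ->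
  conjc (e * a + conjc e * b) = e * a + conjc e * b.
Proof.
rewrite conjcD !conjcM conjcD conjcK rmorphN /= conjcK => h.
apply/eqP; rewrite -subr_eq0; apply/eqP.
transitivity (- (e * (a - conjc b) - conjc e * (conjc a - b))); first ring.
by rewrite -h; ring.
Qed.

Lemma rayleigh_lerp n (T : 'M[C]_n) x1 x2 (t : R) :
  vnorm x1 = 1 -> vnorm x2 = 1 -> 0 < t -> t < 1 -> qform T x1 != qform T x2 ->
  exists2 q, q != 0 &
    qform T q = (qform T x1 + t%:C * (qform T x2 - qform T x1)) * dotc q q.
Proof.
move=> x1_1 x2_1 t_gt0 t_lt1; set w1 := qform T x1; set w2 := qform T x2 => w_neq.
set D := w2 - w1; set z := w1 + t%:C * D.
have D_neq0 : D != 0 by rewrite subr_eq0 eq_sym.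
have d11 : dotc x1 x1 = 1 by rewrite dotcc x1_1 expr1n.
have d22 : dotc x2 x2 = 1 by rewrite dotcc x2_1 expr1n.
set f12 := dotc x1 (T *m x2); set f21 := dotc x2 (T *m x1).
set a := (f12 - z * dotc x1 x2) / D; set b := (f21 - z * dotc x2 x1) / D.
have f12E : f12 = D * a + z * dotc x1 x2 by rewrite /a; field.
have f21E : f21 = D * b + z * dotc x2 x1 by rewrite /b; field.
(* a phase [e] making the cross term real reduces [qform T q = z |q|^2] to a real quadratic *)
have [e ee1 /conjc_phase_sum/conjc_eq_real rhoE] := exists_phase (a - conjc b).
have [y y_gt0 y_root] := quadratic_pos_root (Re (e * a + conjc e * b)) t_gt0 t_lt1.
set c := y%:C * e; exists (x1 + c *: x2).
  apply: contra w_neq => /eqP q0.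
  have x1E : x1 = (- c) *: x2 by rewrite scaleNr; apply/eqP; rewrite -subr_eq0 opprK q0.
  have cc : conjc (- c) * (- c) = y%:C ^+ 2.
    by rewrite rmorphN mulrNN /= conjcM conjc_real mulrACA ee1 mulr1 expr2.
  have y1 : y%:C ^+ 2 = 1 by rewrite -d11 x1E dotcZl dotcZr mulrA cc d22 mulr1.
  by rewrite /w1 x1E qformZ cc y1 mul1r.
apply/eqP; rewrite -subr_eq0; apply/eqP.
rewrite qform_addZ dotc_addZ -/w1 -/w2 -/f12 -/f21 d11 d22 f12E f21E.
have -> : conjc c = y%:C * conjc e by rewrite conjcM conjc_real.
transitivity (D * ((1 - t%:C) * y%:C ^+ 2 * (conjc e * e) +
                   (e * a + conjc e * b) * y%:C - t%:C)).
  by rewrite /z /D /c; ring.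
set rho := Re _ in rhoE y_root.
rewrite ee1 mulr1 rhoE -[1]/(1%:C) -!rmorphXn -!rmorphB -!rmorphM -rmorphD -rmorphB /=.
by rewrite y_root mulr0.
Qed.

Lemma numerical_range_convex n (T : 'M[C]_n) x1 x2 (t : R) :
  vnorm x1 = 1 -> vnorm x2 = 1 -> 0 <= t <= 1 ->
  exists2 x, vnorm x = 1 & qform T x = (1 - t)%:C * qform T x1 + t%:C * qform T x2.
Proof.
move=> x1_1 x2_1 /andP[t_ge0 t_le1].
have [->|t_neq0] := eqVneq t 0; first by exists x1; rewrite // subr0 mul1r mul0r addr0.
have [->|t_neq1] := eqVneq t 1; first by exists x2; rewrite // subrr mul0r mul1r add0r.
have [w12|w_neq] := eqVneq (qform T x1) (qform T x2).
  by exists x1; rewrite // -w12 -mulrDl -rmorphD subrK mul1r.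
have t_gt0 : 0 < t by rewrite lt_neqAle eq_sym t_neq0.
have t_lt1 : t < 1 by rewrite lt_neqAle t_neq1.
have [q q_neq0 q_eq] := rayleigh_lerp x1_1 x2_1 t_gt0 t_lt1 w_neq.
have [q' q'_1 qE] := unit_cV_decomp q_neq0; exists q' => //.
have -> : (1 - t)%:C * qform T x1 + t%:C * qform T x2 =
          qform T x1 + t%:C * (qform T x2 - qform T x1) by rewrite rmorphB /=; ring.
move: q_eq; rewrite qE qformZ dotcZl dotcZr dotcc q'_1 conjc_real expr1n mulr1 [_ * (_ * _)]mulrC.
by apply: mulfI; rewrite mulf_neq0 // realC_neq0 // vnorm_eq0.
Qed.

Lemma normc_qform_le n (T : 'M[C]_n) x : vnorm x = 1 -> normc (qform T x) <= specnorm T.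
Proof.
move=> x1; apply: le_trans (normc_dotc_le _ _) _.
by rewrite x1 mul1r -[specnorm T]mulr1 -x1 vnorm_mulmx_le.
Qed.

Lemma normc_lerp_sqr (p f : C) (t : R) :
  normc ((1 - t)%:C * p + t%:C * f) ^+ 2 =
  normc p ^+ 2 + 2%:R * t * (Re (conjc p * f) - normc p ^+ 2) + t ^+ 2 * normc (f - p) ^+ 2.
Proof.
case: p f => [p1 p2] [f1 f2]; rewrite /Normc.normc /= !sqr_sqrtr ?addr_ge0 ?sqr_ge0 //.
ring.
Qed.

Lemma crawfordE n (A B : 'M[C]_n) :
  crawford A B = inf [set normc (qform (A + iC R *: B) x) | x in [set x | vnorm x = 1]].
Proof. by congr inf; apply: eq_imagel => x _; rewrite -mulmxA dotcE. Qed.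

Lemma crawford_le n (A B : 'M[C]_n) x :
  vnorm x = 1 -> crawford A B <= normc (qform (A + iC R *: B) x).
Proof.
move=> x1; rewrite crawfordE; apply: ge_inf; last by exists x.
by exists 0 => _ [y _ <-]; exact: normc_ge0.
Qed.

Lemma crawford_approx n (A B : 'M[C]_n) d : 0 < crawford A B -> 0 < d ->
  exists2 x, vnorm x = 1 & normc (qform (A + iC R *: B) x) < crawford A B + d.
Proof.
rewrite crawfordE; set E := (X in inf X) => g_gt0 d_gt0.
have [E0|/set0P E_ne] := eqVneq E set0; first by rewrite E0 inf0 ltxx in g_gt0.
have E_lb : has_lbound E by exists 0 => _ [y _ <-]; exact: normc_ge0.
by have [_ [x x1 <-]] := inf_adherent d_gt0 (conj E_ne E_lb); exists x.
Qed.

Lemma near_minimizer_half_plane n (T : 'M[C]_n) (g eta t : R) x1 :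
  0 < eta -> 0 < t <= 1 -> t * (4%:R * specnorm T ^+ 2) <= g * eta -> 0 <= g ->
  (forall x, vnorm x = 1 -> g <= normc (qform T x)) ->
  vnorm x1 = 1 -> normc (qform T x1) ^+ 2 <= g ^+ 2 + t * g * eta ->
  forall x, vnorm x = 1 ->
  (g - eta) * normc (qform T x1) <= Re (conjc (qform T x1) * qform T x).
Proof.
move=> eta_gt0 /andP[t_gt0 t_le1] ts_le g_ge0 g_le x1_1 p_sqr_le x x_1.
set p := qform T x1; set f := qform T x.
have [x' x'_1 x'E] := numerical_range_convex T x1_1 x_1 (introT andP (conj (ltW t_gt0) t_le1)).
have fp_le : normc (f - p) <= 2%:R * specnorm T.
  apply: le_trans (le_normcD f (- p)) _; rewrite normcN mulr2n mulrDl mul1r.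
  by apply: lerD; apply: normc_qform_le.
apply: (lerp_lower_bound g_ge0 eta_gt0 t_gt0 ts_le _ (normc_lerp_sqr p f t)) => //.
- have -> : 4%:R * specnorm T ^+ 2 = (2%:R * specnorm T) ^+ 2 by rewrite exprMn; congr (_ * _); ring.
  by rewrite ler_pXn2r ?nnegrE ?normc_ge0 //; exact: le_trans (normc_ge0 _) fp_le.
- by rewrite -x'E g_le.
- exact: g_le.
Qed.

Lemma crawford_rotation n (A B : 'M[C]_n) eta : 0 < crawford A B -> 0 < eta ->
  exists2 w : C, normc w = 1 &
    forall x, (crawford A B - eta) * vnorm x ^+ 2 <= Re (w * qform (A + iC R *: B) x).
Proof.
move=> g_gt0 eta_gt0.
set T := A + iC R *: B; set g := crawford A B in g_gt0 *.
set s := 4%:R * specnorm T ^+ 2.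
have s_ge0 : 0 <= s by rewrite mulr_ge0 ?sqr_ge0.
have ge_gt0 : 0 < g * eta := mulr_gt0 g_gt0 eta_gt0.
set t := g * eta / (s + g * eta).
have t_gt0 : 0 < t by rewrite divr_gt0 //; lra.
have t_le1 : t <= 1 by rewrite ler_pdivrMr ?mul1r; lra.
have ts_le : t * s <= g * eta.
  by rewrite /t mulrAC ler_pdivrMr ?ler_pM2l; lra.
have [del del_gt0 del_sqr] := exists_sqr_increment (ltW g_gt0) (mulr_gt0 t_gt0 ge_gt0).
have [x1 x1_1 x1_lt] := crawford_approx g_gt0 del_gt0; rewrite -/T -/g in x1_lt.
set p := qform T x1; set P := normc p; rewrite -/p -/P in x1_lt.
have g_le : forall x, vnorm x = 1 -> g <= normc (qform T x) by move=> x; exact: crawford_le.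
have P_gt0 : 0 < P by apply: lt_le_trans (g_le _ x1_1).
have P_sqr_le : P ^+ 2 <= g ^+ 2 + t * g * eta.
  rewrite -mulrA; apply: le_trans del_sqr; rewrite ler_pXn2r ?nnegrE //; lra.
have half_plane := near_minimizer_half_plane eta_gt0 (introT andP (conj t_gt0 t_le1)) ts_le
  (ltW g_gt0) g_le x1_1 P_sqr_le.
exists (conjc p / P%:C).
  by rewrite Normc.normcM Normc.normcV normc_conj normc_real gtr0_norm // mulfV ?gt_eqF.
move=> x; have [->|x_neq0] := eqVneq x 0.
  by rewrite vnorm0 expr0n mulr0 /qform mulmx0 dotcc vnorm0 expr0n mulr0.
have [y y_1 ->] := unit_cV_decomp x_neq0.
rewrite qformZ conjc_real vnormZ normc_real ger0_norm ?vnorm_ge0 // y_1 mulr1.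
rewrite -rmorphM /= [X in Re X]mulrCA Re_realM [X in Re X]mulrAC [X in Re X]mulrC.
rewrite -fmorphV Re_realM -expr2 mulrC ler_wpM2l ?sqr_ge0 //.
by rewrite mulrC ler_pdivlMr // half_plane.
Qed.

Definition rot_pencil n (w : C) (A B : 'M[C]_n) := (Re w)%:C *: A - (Im w)%:C *: B.

Lemma qform_hermitian n (A : 'M[C]_n) x :
  Defs.hermitian A -> qform A x = (Re (qform A x))%:C.
Proof. by move=> hA; apply: conjc_eq_real; rewrite /qform -dotcC -{2}hA dotc_mulmx ctrK. Qed.

Lemma qform_rot_pencil n (w : C) (A B : 'M[C]_n) x :
  Defs.hermitian A -> Defs.hermitian B ->
  qform (rot_pencil w A B) x = (Re (w * qform (A + iC R *: B) x))%:C.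
Proof.
move=> hA hB; have qAB : qform (A + iC R *: B) x = qform A x + iC R * qform B x.
  by rewrite /qform mulmxDl -scalemxAl dotcDr dotcZr.
rewrite qAB /qform /rot_pencil mulmxBl -!scalemxAl dotcBr !dotcZr -!/(qform _ x).
rewrite (qform_hermitian x hA) (qform_hermitian x hB).
case: w => w1 w2; rewrite /iC /=.
by apply/eqP; rewrite eq_complex /=; apply/andP; split; apply/eqP; ring.
Qed.

Lemma vnorm_rot_pencil_le n (w : C) (A B : 'M[C]_n) y : normc w = 1 ->
  vnorm (rot_pencil w A B *m y) <= pencil_norm A B * vnorm y.
Proof.
move=> w1; have -> : rot_pencil w A B *m y = A *m ((Re w)%:C *: y) + B *m ((- Im w)%:C *: y).
  by rewrite /rot_pencil mulmxBl -!scalemxAl -!scalemxAr rmorphN /= scaleNr.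
apply: le_trans (vnorm_pencil_le _ _ _ _) _.
rewrite !vnormZ !normc_real !exprMn !real_normK ?num_real // -mulrDl sqrrN.
have -> : Re w ^+ 2 + Im w ^+ 2 = 1.
  by move: w1; case: w => a b /= w1; rewrite -[LHS]sqr_sqrtr ?addr_ge0 ?sqr_ge0 // w1 expr1n.
by rewrite mul1r sqrtr_sqr ger0_norm ?vnorm_ge0.
Qed.

Lemma outer_mulmx n (w v : 'cV[C]_n) : (w *m ctr w) *m v = dotc w v *: w.
Proof.
rewrite -mulmxA (_ : ctr w *m v = (dotc w v)%:M) ?mul_mx_scalar //.
by apply/matrixP => i j; rewrite (ord1 i) (ord1 j) dotcE mxE eqxx mulr1n.
Qed.

Lemma householder_reflection n (x y : 'cV[C]_n) :
  vnorm x = 1 -> vnorm y = 1 -> conjc (dotc x y) = dotc x y ->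
  exists H : 'M[C]_n, [/\ Defs.hermitian H, H *m x = y & forall v, vnorm (H *m v) = vnorm v].
Proof.
move=> x_1 y_1 xy_real.
have [<-|y_neq_x] := eqVneq y x.
  by exists 1%:M; split=> [|//|v]; rewrite ?mul1mx // /Defs.hermitian ctr1.
have dxx : dotc x x = 1 by rewrite dotcc x_1 expr1n.
have dyy : dotc y y = 1 by rewrite dotcc y_1 expr1n.
set w := x - y; set sg := vnorm w ^+ 2.
have sg_gt0 : 0 < sg by rewrite exprn_gt0 // vnorm_gt0 subr_eq0 eq_sym.
have sgE : sg%:C = 2%:R * (1 - dotc x y).
  by rewrite -dotcc /w dotcBl !dotcBr dxx dyy -xy_real -dotcC; ring.
set c := (2%:R / sg)%:C; set H := 1%:M - c *: (w *m ctr w).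
have HE v : H *m v = v - (c * dotc w v) *: w.
  by rewrite /H mulmxBl mul1mx -scalemxAl outer_mulmx scalerA.
have c_sg : c * sg%:C = 2%:R by rewrite /c -rmorphM /= mulfVK ?gt_eqF // rmorphMn rmorph1.
exists H; split.
- by rewrite /Defs.hermitian /H ctrD ctrN ctrZ conjc_real ctr_mul ctrK ctr1.
- rewrite HE (_ : dotc w x = 1 - dotc x y); last by rewrite /w dotcBl dxx -xy_real -dotcC.
  have -> : c * (1 - dotc x y) = 1.
    have two_neq0 : (2%:R : C) != 0 by rewrite pnatr_eq0.
    by rewrite -(mulKf two_neq0 (1 - dotc x y)) -sgE mulrCA c_sg mulVf.
  by rewrite scale1r /w opprB addrC subrK.
- move=> v; have : dotc (H *m v) (H *m v) = dotc v v.
    rewrite HE dotcBl !dotcBr !dotcZl !dotcZr conjcM conjc_real (dotcC w v) (dotcc w) -/sg.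
    transitivity (dotc v v + dotc w v * conjc (dotc w v) * c * (c * sg%:C - 2%:R)); first ring.
    by rewrite c_sg subrr mulr0 addr0.
  by rewrite !dotcc => -[/eqP]; rewrite eqrXn2 ?vnorm_ge0 // => /eqP.
Qed.

Lemma hermitian_solution n (x r : 'cV[C]_n) :
  vnorm x = 1 -> conjc (dotc x r) = dotc x r ->
  exists E : 'M[C]_n, [/\ Defs.hermitian E, E *m x = r & specnorm E <= vnorm r].
Proof.
move=> x_1 xr_real; have [->|r_neq0] := eqVneq r 0.
  exists 0; rewrite mul0mx vnorm0; split=> //.
    by apply/matrixP => i j; rewrite !mxE conjc0.
  by apply: specnorm_le => // v; rewrite mul0mx vnorm0 mul0r.
have [y y_1 rE] := unit_cV_decomp r_neq0.
have xy_real : conjc (dotc x y) = dotc x y.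
  move: xr_real; rewrite rE dotcZr conjcM conjc_real; apply: mulfI.
  by rewrite realC_neq0 // vnorm_eq0.
have [H [hH Hx Hiso]] := householder_reflection x_1 y_1 xy_real.
exists ((vnorm r)%:C *: H); split.
- by rewrite /Defs.hermitian ctrZ conjc_real hH.
- by rewrite -scalemxAl Hx.
- apply: specnorm_le; first exact: vnorm_ge0.
  by move=> v; rewrite -scalemxAl vnormZ normc_real ger0_norm ?vnorm_ge0 // Hiso.
Qed.

Lemma coercive_unitmx k (H : 'M[C]_k) (mu : R) : 0 < mu ->
  (forall q, mu * vnorm q <= vnorm (H *m q)) -> H \in unitmx.
Proof.
move=> mu_gt0 Hmu; rewrite unitmxE unitfE -det_tr; apply/negP => /det0P[v v_neq0 vH].
have HvT : H *m v^T = 0 by rewrite -[H]trmxK -trmx_mul vH trmx0.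
have := Hmu v^T; rewrite HvT vnorm0 pmulr_rle0 // => vT_le0.
have /eqP : vnorm v^T = 0 by apply/eqP; rewrite eq_le vT_le0 vnorm_ge0.
rewrite vnorm_eq0 => /eqP/(congr1 trmx); rewrite trmxK trmx0 => v0.
by rewrite v0 eqxx in v_neq0.
Qed.

Lemma deflating_span_factor n k (A B : 'M[C]_n) (U : 'M[C]_(n, k)) (V : 'M[C]_(k, n)) (a b : C) :
  right_deflating_span A B U -> V *m ((a *: A - b *: B) *m U) \in unitmx ->
  exists D1 D2, A *m U = (a *: A - b *: B) *m U *m D1 /\ B *m U = (a *: A - b *: B) *m U *m D2.
Proof.
move=> hr hu; set S := (a *: A - b *: B) *m U; set M := (row_mx (A *m U) (B *m U))^T.
have SE : S = row_mx (A *m U) (B *m U) *m col_mx a%:M (- b)%:M.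
  by rewrite mul_row_col !mul_mx_scalar /S mulmxBl -!scalemxAl scaleNr.
have S_sub : (S^T <= M)%MS by rewrite SE trmx_mul submxMl.
(* [V S] is invertible, so [S] has rank [k], which bounds the rank of [[A U, B U]] *)
have rank_le : (\rank M <= \rank S^T)%N.
  rewrite !mxrank_tr; apply: leq_trans hr _; apply: leq_trans (rank_leq_col U) _.
  by have := mxrankM_maxr V S; rewrite mxrank_unit.
have M_sub : (M <= S^T)%MS.
  by have [le_rank <-] := mxrank_leqif_sup S_sub; rewrite eqn_leq le_rank rank_le.
move: M_sub; rewrite /M tr_row_mx col_mx_sub => /andP[/submxP[D1 hD1] /submxP[D2 hD2]].
exists D1^T, D2^T.
by split; apply: trmx_inj; rewrite ?hD1 ?hD2 [RHS]trmx_mul trmxK.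
Qed.

Lemma rot_compression_coercive n k (A B : 'M[C]_n) (U : 'M[C]_(n, k)) (w : C) (mu : R) :
  Defs.hermitian A -> Defs.hermitian B -> ctr U *m U = 1%:M ->
  (forall x, mu * vnorm x ^+ 2 <= Re (w * qform (A + iC R *: B) x)) ->
  forall q, mu * vnorm q <= vnorm (ctr U *m (rot_pencil w A B *m U) *m q).
Proof.
move=> hA hB UU hw q; set H := ctr U *m _.
have [->|q_neq0] := eqVneq q 0; first by rewrite mulmx0 !vnorm0 mulr0.
have dotcE : dotc q (H *m q) = (Re (w * qform (A + iC R *: B) (U *m q)))%:C.
  by rewrite -!mulmxA dotc_mulmx ctrK -qform_rot_pencil.
have := Re_dotc_le q (H *m q); rewrite dotcE /=.
have := hw (U *m q); rewrite isometry_vnorm // => mu_le le_norm.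
have q_gt0 : 0 < vnorm q by rewrite vnorm_gt0.
rewrite -(ler_pM2l q_gt0) mulrCA -expr2.
exact: le_trans mu_le le_norm.
Qed.

Lemma deflating_compression_factor n k (A B : 'M[C]_n) (U : 'M[C]_(n, k)) (w : C) (mu : R) :
  Defs.hermitian A -> Defs.hermitian B -> ctr U *m U = 1%:M -> right_deflating_span A B U ->
  normc w = 1 -> 0 < mu -> (forall x, mu * vnorm x ^+ 2 <= Re (w * qform (A + iC R *: B) x)) ->
  exists L : 'M[C]_(n, k), [/\ ctr U *m L = 1%:M,
    A *m U = L *m (ctr U *m A *m U), B *m U = L *m (ctr U *m B *m U) &
    forall v, vnorm (L *m v) <= pencil_norm A B / mu * vnorm v].
Proof.
move=> hA hB UU hdef w_1 mu_gt0 hw.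
set S := rot_pencil w A B *m U; set H := ctr U *m S.
have H_coercive := rot_compression_coercive hA hB UU hw.
have H_unit : H \in unitmx := coercive_unitmx mu_gt0 H_coercive.
have [D1 [D2 [AU BU]]] := deflating_span_factor hdef H_unit.
have lift M D : M = S *m D -> M = S *m invmx H *m (ctr U *m M).
  by move=> ->; rewrite (mulmxA _ S) -/H -mulmxA (mulmxA (invmx H)) mulVmx // mul1mx.
exists (S *m invmx H); split.
- by rewrite mulmxA -/H mulmxV.
- by rewrite -[ctr U *m A *m U]mulmxA; exact: lift AU.
- by rewrite -[ctr U *m B *m U]mulmxA; exact: lift BU.
move=> v; set q := invmx H *m v.
have Hq : H *m q = v by rewrite /q mulmxA mulmxV // mul1mx.
rewrite -mulmxA -/q /S -mulmxA; apply: le_trans (vnorm_rot_pencil_le _ _ _ w_1) _.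
rewrite isometry_vnorm // mulrAC ler_pdivlMr // -mulrA ler_wpM2l ?specnorm_ge0 //.
by rewrite mulrC -Hq; exact: H_coercive.
Qed.

Lemma hermitian_lift n k (U L : 'M[C]_(n, k)) (E' : 'M[C]_k) u (c : R) :
  ctr U *m U = 1%:M -> ctr U *m L = 1%:M -> Defs.hermitian E' -> vnorm u = 1 -> 0 <= c ->
  (forall v, vnorm (L *m v) <= c * vnorm v) ->
  exists E, [/\ Defs.hermitian E, E *m (U *m u) = L *m (E' *m u) & specnorm E <= c * specnorm E'].
Proof.
move=> UU UL hE' u_1 c_ge0 Lc.
have Uu_1 : vnorm (U *m u) = 1 by rewrite isometry_vnorm.
have real_dotc : conjc (dotc (U *m u) (L *m (E' *m u))) = dotc (U *m u) (L *m (E' *m u)).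
  have -> : dotc (U *m u) (L *m (E' *m u)) = qform E' u.
    by rewrite -[U]ctrK -dotc_mulmx mulmxA UL mul1mx.
  by rewrite (qform_hermitian u hE') conjc_real.
have [E [hE Ex E_le]] := hermitian_solution Uu_1 real_dotc.
exists E; split=> //; apply: le_trans E_le _; apply: le_trans (Lc _) _.
by rewrite ler_wpM2l // -[specnorm E']mulr1 -u_1 vnorm_mulmx_le.
Qed.

Lemma pencil_eigvec_unit m (A B E F : 'M[C]_m) (z : C) (u : 'cV[C]_m) : u != 0 ->
  (A + E) *m u = z *: ((B + F) *m u) ->
  exists2 u1, vnorm u1 = 1 & (A + E) *m u1 = z *: ((B + F) *m u1).
Proof.
move=> u_neq0; have [u1 u1_1 ->] := unit_cV_decomp u_neq0.
rewrite -!scalemxAr scalerA mulrC -scalerA => /scalerI eq1; exists u1 => //.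
by apply: eq1; rewrite realC_neq0 // vnorm_eq0.
Qed.

End PencilCompression.

Theorem lemma4p1 (R : realType) (n k : nat) (A B : 'M[R[i]]_n) (U : 'M[R[i]]_(n, k)) :
  definite_pencil A B ->
  ctr U *m U = 1%:M ->
  right_deflating_span A B U ->
  forall eps eps' : R, 0 < eps -> 0 < eps' ->
  eps' <= eps * (1 + pencil_norm A B / crawford A B)^-1 ->
  sym_pseudospec eps' (ctr U *m A *m U) (ctr U *m B *m U) `<=` sym_pseudospec eps A B.
Proof.
move=> [hA hB g_gt0] UU hdef eps eps' _ eps'_gt0 eps'_le z.
move=> [u [E' [F' [u_neq0 hE' hF' norm_le eq_u]]]].
have [u1 u1_1 eq_u1] := pencil_eigvec_unit u_neq0 eq_u.
have N_ge0 : 0 <= pencil_norm A B := specnorm_ge0 _.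
have [eta /andP[eta_gt0 eta_lt] ratio_le] := ratio_slack g_gt0 N_ge0.
have [w w_1 hw] := crawford_rotation g_gt0 eta_gt0.
have mu_gt0 : 0 < crawford A B - eta by rewrite subr_gt0.
have [L [UL AU BU L_le]] := deflating_compression_factor hA hB UU hdef w_1 mu_gt0 hw.
set c := pencil_norm A B / (crawford A B - eta) in L_le ratio_le.
have c_ge0 : 0 <= c := divr_ge0 N_ge0 (ltW mu_gt0).
have [E [hE Ex E_le]] := hermitian_lift UU UL hE' u1_1 c_ge0 L_le.
have [F [hF Fx F_le]] := hermitian_lift UU UL hF' u1_1 c_ge0 L_le.
exists (U *m u1), E, F; split=> //.
- by rewrite -vnorm_eq0 isometry_vnorm // u1_1 oner_eq0.
- have E_bnd : 0 <= specnorm E <= c * specnorm E' by rewrite specnorm_ge0 E_le.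
  have F_bnd : 0 <= specnorm F <= c * specnorm F' by rewrite specnorm_ge0 F_le.
  apply: le_trans (sqrt_sum_sqr_le c_ge0 E_bnd F_bnd) _.
  apply: le_trans (ler_wpM2l c_ge0 norm_le) _.
  apply: le_trans (ler_wpM2r (ltW eps'_gt0) ratio_le) _.
  have K_gt0 : 0 < 1 + pencil_norm A B / crawford A B.
    by have := divr_ge0 N_ge0 (ltW g_gt0); lra.
  by rewrite mulrC -ler_pdivlMr.
- rewrite !mulmxDl Ex Fx !mulmxA AU BU -!mulmxDl -!mulmxDr.
  by rewrite -[_ *m _ *m u1]mulmxA eq_u1 -scalemxAr mulmxA.
Qed.
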